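(* Let $G$ be a finite connected groupoid with $G_0=\{e_1,\dots,e_r\}$, $A=\bigoplus_{i=1}^r A_i$ a unital ring with $A_i:=A_{e_i}$ having identity $1_i$, and $\alpha=(A_g,\alpha_g)_{g\in G}$ a unital partial action of $G$ on $A$. If there exists $a\in C(A)$ such that $t_i(a)=1_i$ for all $i=1,\dots,r$, then $A\subset A\star_\alpha G$ is a semisimple ring extension.
   Context: A groupoid $G$ is a small category in which every morphism is invertible; $G_0$ is its object set (objects identified with identity morphisms), $s,t$ source and target; $gh$ is defined iff $s(g)=t(h)$; $G(e,f)$ is the set of morphisms from $e$ to $f$; $G$ is connected if $G(e,f)\neq\emptyset$ for all $e,f\in G_0$. A unital partial action of $G$ on $A$ is a family $\alpha=(A_g,\alpha_g)_{g\in G}$ where $A_{t(g)}$ is a two-sided ideal of $A$, $A_g=A1_g$ is a two-sided ideal of $A_{t(g)}$ with $1_g$ a central idempotent of $A$, $\alpha_g:A_{g^{-1}}\to A_g$ a ring isomorphism, such that $\alpha_e=\mathrm{id}_{A_e}$ for $e\in G_0$, $\alpha_h^{-1}(A_{g^{-1}}\cap A_h)\subseteq A_{(gh)^{-1}}$ and $\alpha_g(\alpha_h(x))=\alpha_{gh}(x)$ for $x\in\alpha_h^{-1}(A_{g^{-1}}\cap A_h)$, whenever $s(g)=t(h)$. The partial skew groupoid ring $A\star_\alpha G=\bigoplus_{g\in G}A_g\delta_g$ has multiplication $(a_g\delta_g)(b_h\delta_h)=\alpha_g(\alpha_{g^{-1}}(a_g)b_h)\delta_{gh}$ if $s(g)=t(h)$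 and $0$ otherwise; it is unital with $1=\sum_{e\in G_0}1_e\delta_e$, and $A$ is regarded as a subring via $a\mapsto\sum_{e\in G_0}(a1_e)\delta_e$. Trace maps: $t_{i,j}(a)=\sum_{g\in G(e_i,e_j)}\alpha_g(a1_{g^{-1}})$ and $t_j(a)=\sum_{i=1}^r t_{i,j}(a)$. $C(A)$ is the center of $A$. A ring extension $R\subseteq S$ is semisimple if every exact sequence of left $S$-modules that splits as a sequence of left $R$-modules also splits as a sequence of left $S$-modules. *)

From HB Require Import structures.
From mathcomp Require Import all_boot all_order all_algebra.
Set Implicit Arguments. Unset Strict Implicit. Unset Printing Implicit Defensive.
Import GRing.Theory.
Local Open Scope ring_scope.

(* Finite groupoids.  Objects [obj] and morphisms [mor] are finite types;
   objects are identified with identity morphisms through [idm].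
   [comp g h] is meaningful exactly when [src g = tgt h].               *)
Record groupoid := Groupoid {
  obj : finType;
  mor : finType;
  src : mor -> obj;
  tgt : mor -> obj;
  idm : obj -> mor;
  comp : mor -> mor -> mor;
  ginv : mor -> mor;
  src_idm : forall e, src (idm e) = e;
  tgt_idm : forall e, tgt (idm e) = e;
  src_comp : forall g h, src g = tgt h -> src (comp g h) = src h;
  tgt_comp : forall g h, src g = tgt h -> tgt (comp g h) = tgt g;
  compA : forall g h k, src g = tgt h -> src h = tgt k ->
            comp (comp g h) k = comp g (comp h k);
  comp_idl : forall g, comp (idm (tgt g)) g = g;
  comp_idr : forall g, comp g (idm (src g)) = g;
  src_ginv : forall g, src (ginv g) = tgt g;
  tgt_ginv : forall g, tgt (ginv g) = src g;
  comp_ginvr : forall g, comp g (ginv g) = idm (tgt g);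
  comp_ginvl : forall g, comp (ginv g) g = idm (src g)
}.

Definition homset (G : groupoid) (e f : obj G) : pred (mor G) :=
  fun g => (src g == e) && (tgt g == f).

Definition connected (G : groupoid) : Prop :=
  forall e f : obj G, exists g : mor G, (src g = e) /\ (tgt g = f).

(* Ideals A_g = A 1_g given by central idempotents [one g].            *)
Definition in_ideal (A : pzRingType) (u : A) (x : A) : Prop :=
  exists y : A, x = y * u.

Definition central (A : pzRingType) (a : A) : Prop :=
  forall b : A, a * b = b * a.

(* Unital partial action alpha = (A_g, alpha_g)_{g in G} of G on A,
   with A_g = A (one g) and alpha g : A_{g^-1} -> A_g (given as a total
   function on A, only its restriction to A_{g^-1} matters).            *)
Definition unital_partial_action (G : groupoid) (A : pzRingType)
    (one : mor G -> A) (alpha : mor G -> A -> A) : Prop :=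
  [/\
      (forall g, central (one g) /\ one g * one g = one g),
      (forall g x, in_ideal (one g) x -> in_ideal (one (idm (tgt g))) x),
      (forall g,
         [/\ forall x, in_ideal (one (ginv g)) x -> in_ideal (one g) (alpha g x),
             forall x y, in_ideal (one (ginv g)) x -> in_ideal (one (ginv g)) y ->
               alpha g (x + y) = alpha g x + alpha g y,
             forall x y, in_ideal (one (ginv g)) x -> in_ideal (one (ginv g)) y ->
               alpha g (x * y) = alpha g x * alpha g y,
             forall x y, in_ideal (one (ginv g)) x -> in_ideal (one (ginv g)) y ->
               alpha g x = alpha g y -> x = y
           & forall y, in_ideal (one g) y ->
               exists2 x, in_ideal (one (ginv g)) x & alpha g x = y]),
      (forall e x, in_ideal (one (idm e)) x -> alpha (idm e) x = x)
    &
      (forall g h, src g = tgt h -> forall x,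
         in_ideal (one (ginv h)) x ->
         in_ideal (one (ginv g)) (alpha h x) -> in_ideal (one h) (alpha h x) ->
         in_ideal (one (ginv (comp g h))) x /\
         alpha g (alpha h x) = alpha (comp g h) x)].

(* The partial skew groupoid ring A *_alpha G = (+)_g A_g delta_g.
   An element  sum_g a_g delta_g  is represented by the function g |-> a_g
   (subject to a_g in A_g).                                              *)
Section Skew.
Variables (G : groupoid) (A : pzRingType) (one : mor G -> A)
          (alpha : mor G -> A -> A).

Definition skew_elt (f : mor G -> A) : Prop := forall g, in_ideal (one g) (f g).

Definition skew_add (f k : mor G -> A) : mor G -> A := fun g => f g + k g.

Definition skew_mul (f k : mor G -> A) : mor G -> A := fun x =>
  \sum_(g : mor G) \sum_(h : mor G | (src g == tgt h) && (comp g h == x))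
     alpha g (alpha (ginv g) (f g) * k h).

Definition skew_emb (a : A) : mor G -> A := fun g =>
  if g == idm (src g) then a * one g else 0.

Definition skew_one : mor G -> A := skew_emb 1.

Definition skew_module (M : zmodType) (act : (mor G -> A) -> M -> M) : Prop :=
  [/\ forall f m m', skew_elt f -> act f (m + m') = act f m + act f m',
      forall f k m, skew_elt f -> skew_elt k ->
        act (skew_add f k) m = act f m + act k m,
      forall f k m, skew_elt f -> skew_elt k ->
        act (skew_mul f k) m = act f (act k m)
    & forall m, act skew_one m = m].

Definition additive_map (M N : zmodType) (phi : M -> N) : Prop :=
  forall x y, phi (x + y) = phi x + phi y.

Definition skew_linear (M N : zmodType) (actM : (mor G -> A) -> M -> M)
    (actN : (mor G -> A) -> N -> N) (phi : M -> N) : Prop :=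
  additive_map phi /\
  forall f m, skew_elt f -> phi (actM f m) = actN f (phi m).

Definition base_linear (M N : zmodType) (actM : (mor G -> A) -> M -> M)
    (actN : (mor G -> A) -> N -> N) (phi : M -> N) : Prop :=
  additive_map phi /\
  forall a m, phi (actM (skew_emb a) m) = actN (skew_emb a) (phi m).

(* The ring extension A subset A *_alpha G is semisimple: every (short)
   exact sequence 0 -> L -i-> M -p-> N -> 0 of left (A *_alpha G)-modules
   which splits as a sequence of left A-modules also splits as a sequence
   of left (A *_alpha G)-modules.  Splitting = existence of a section of p
   which is linear for the relevant ring.                                *)
Definition semisimple_skew_extension : Prop :=
  forall (L M N : zmodType)
         (actL : (mor G -> A) -> L -> L) (actM : (mor G -> A) -> M -> M)
         (actN : (mor G -> A) -> N -> N) (i : L -> M) (p : M -> N),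
    skew_module actL -> skew_module actM -> skew_module actN ->
    skew_linear actL actM i -> skew_linear actM actN p ->
    injective i -> (forall n, exists m, p m = n) ->
    (forall m, p m = 0 <-> exists l, i l = m) ->
    (exists q : N -> M, base_linear actN actM q /\ forall n, p (q n) = n) ->
    (exists q : N -> M, skew_linear actN actM q /\ forall n, p (q n) = n).

End Skew.

Definition trace_ij (G : groupoid) (A : pzRingType) (one : mor G -> A)
    (alpha : mor G -> A -> A) (ei ej : obj G) (a : A) : A :=
  \sum_(g : mor G | homset ei ej g) alpha g (a * one (ginv g)).

Definition trace_j (G : groupoid) (A : pzRingType) (one : mor G -> A)
    (alpha : mor G -> A -> A) (ej : obj G) (a : A) : A :=
  \sum_(ei : obj G) trace_ij one alpha ei ej a.

(* Averaging an A-linear section with the trace element makes it (A *_alpha G)-linear.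
   Given an A-linear section q of p, put
     q'(n) = sum_g (1_g delta_g) q ((a 1_{g^-1} delta_{g^-1}) n).
   Centrality of a makes q' commute with A, the identity
   alpha_{g^-1}(1_g 1_h) = 1_{g^-1} 1_{g^-1 h} turns left multiplication by 1_h delta_h
   into the reindexing g |-> h^-1 g, and
   sum_g (1_g delta_g)(a 1_{g^-1} delta_{g^-1}) = sum_e t_e(a) delta_e = 1
   shows that q' is still a section of p. *)

From Pilot Require Import Defs.
From HB Require Import structures.
From mathcomp Require Import all_boot all_order all_algebra.
From Stdlib Require Import FunctionalExtensionality.
Set Implicit Arguments. Unset Strict Implicit. Unset Printing Implicit Defensive.
Import GRing.Theory.
Local Open Scope ring_scope.

(* Plain [comp] would resolve to ssrfun's function composition. *)
Local Notation gcomp := Defs.comp.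

Section GroupoidTheory.
Variable G : groupoid.
Implicit Types (g h k : mor G) (e : obj G).

Lemma ginvK g : ginv (ginv g) = g.
Proof.
rewrite -[LHS]comp_idr src_ginv tgt_ginv -comp_ginvl.
by rewrite -Defs.compA ?comp_ginvl ?src_ginv ?tgt_ginv ?comp_idl.
Qed.

Lemma ginv_idm e : ginv (idm e) = idm e.
Proof.
have := comp_idl (ginv (idm e)).
by rewrite tgt_ginv src_idm comp_ginvr tgt_idm => <-.
Qed.

Lemma compKVg g h : tgt g = tgt h -> gcomp h (gcomp (ginv h) g) = g.
Proof.
move=> tg; rewrite -Defs.compA ?tgt_ginv ?src_ginv //.
by rewrite comp_ginvr -tg comp_idl.
Qed.

Lemma compKg h k : tgt k = src h -> gcomp (ginv h) (gcomp h k) = k.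
Proof.
move=> tk; rewrite -Defs.compA ?tgt_ginv ?src_ginv //.
by rewrite comp_ginvl -tk comp_idl.
Qed.

Lemma ginvM g h : src g = tgt h -> ginv (gcomp g h) = gcomp (ginv h) (ginv g).
Proof.
move=> sg; set x := gcomp g h; set y := gcomp (ginv h) (ginv g).
have ty : tgt y = src x by rewrite tgt_comp ?tgt_ginv ?src_ginv // src_comp.
have xy : gcomp x y = idm (tgt x).
  rewrite Defs.compA //; last by rewrite tgt_comp ?src_ginv ?tgt_ginv.
  rewrite -(@Defs.compA _ h) ?src_ginv ?tgt_ginv // comp_ginvr -sg.
  by rewrite -(tgt_ginv g) comp_idl comp_ginvr tgt_comp.
rewrite -[RHS](compKg ty) xy -(src_ginv x).
by rewrite comp_idr.
Qed.

End GroupoidTheory.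

Section PartialActionTheory.
Variables (G : groupoid) (A : pzRingType).
Variables (one : mor G -> A) (alpha : mor G -> A -> A).
Hypothesis upa : unital_partial_action one alpha.
Implicit Types (g h : mor G) (x y : A).

Lemma oneC g x : one g * x = x * one g.
Proof. by case: upa => H _ _ _ _; case: (H g). Qed.

Lemma one_idem g : one g * one g = one g.
Proof. by case: upa => H _ _ _ _; case: (H g). Qed.

Lemma in_idealP g x : in_ideal (one g) x <-> x * one g = x.
Proof.
split=> [[y ->]|xg]; last by exists x.
by rewrite -mulrA one_idem.
Qed.

Lemma one_tgt g : one g * one (idm (tgt g)) = one g.
Proof.
by case: upa => _ H _ _ _; apply/in_idealP; apply: H; apply/in_idealP; rewrite one_idem.
Qed.

Lemma alpha_in g x : x * one (ginv g) = x -> alpha g x * one g = alpha g x.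
Proof.
case: upa => _ _ H _ _ /in_idealP x_in; case: (H g) => H1 _ _ _ _.
by apply/in_idealP; apply: H1.
Qed.

Lemma alphaD g x y : x * one (ginv g) = x -> y * one (ginv g) = y ->
  alpha g (x + y) = alpha g x + alpha g y.
Proof.
case: upa => _ _ H _ _ /in_idealP x_in /in_idealP y_in.
by case: (H g) => _ H1 _ _ _; apply: H1.
Qed.

Lemma alphaM g x y : x * one (ginv g) = x -> y * one (ginv g) = y ->
  alpha g (x * y) = alpha g x * alpha g y.
Proof.
case: upa => _ _ H _ _ /in_idealP x_in /in_idealP y_in.
by case: (H g) => _ _ H1 _ _; apply: H1.
Qed.

Lemma alpha0 g : alpha g 0 = 0.
Proof.
have zero_in : (0 : A) * one (ginv g) = 0 by rewrite mul0r.
by apply: (addrI (alpha g 0)); rewrite -alphaD // !addr0.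
Qed.

Lemma alpha_idm e x : x * one (idm e) = x -> alpha (idm e) x = x.
Proof. by case: upa => _ _ _ H _ /in_idealP; apply: H. Qed.

Lemma alphaK g x : x * one g = x -> alpha g (alpha (ginv g) x) = x.
Proof.
case: upa => _ _ _ _ H x_in.
have x_in' : x * one (ginv (ginv g)) = x by rewrite ginvK.
have [_ ->] : in_ideal (one (ginv (gcomp g (ginv g)))) x /\
    alpha g (alpha (ginv g) x) = alpha (gcomp g (ginv g)) x.
  by apply: H; rewrite ?tgt_ginv //; apply/in_idealP => //; apply: alpha_in.
rewrite comp_ginvr alpha_idm //.
by rewrite -{1}x_in -mulrA one_tgt.
Qed.

Lemma alphaVK g x : x * one (ginv g) = x -> alpha (ginv g) (alpha g x) = x.
Proof. by move=> x_in; rewrite -{2}[g]ginvK alphaK. Qed.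

Lemma alpha_one g : alpha g (one (ginv g)) = one g.
Proof.
have one_in : alpha (ginv g) (one g) * one (ginv g) = alpha (ginv g) (one g).
  by apply: alpha_in; rewrite ginvK one_idem.
have oneE : one g = alpha g (alpha (ginv g) (one g)) by rewrite alphaK // one_idem.
have : alpha g (one (ginv g)) * one g = one g.
  by rewrite {1}oneE -alphaM ?one_idem // oneC one_in -oneE.
by rewrite alpha_in // one_idem.
Qed.

Lemma alphaV_one g : alpha (ginv g) (one g) = one (ginv g).
Proof. by rewrite -{2}[g]ginvK alpha_one. Qed.

(* Composability of alpha_{h^-1} after alpha_g forces alpha_{g^-1} x into A_{g^-1 h}. *)
Lemma alphaV_in_comp g h x : tgt g = tgt h -> x * one g = x -> x * one h = x ->
  alpha (ginv g) x * one (gcomp (ginv g) h) = alpha (ginv g) x.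
Proof.
move=> tg xg xh; case: upa => _ _ _ _ H.
have xK : alpha g (alpha (ginv g) x) = x by rewrite alphaK.
have [/in_idealP + _] : in_ideal (one (ginv (gcomp (ginv h) g))) (alpha (ginv g) x) /\
    alpha (ginv h) (alpha g (alpha (ginv g) x)) = alpha (gcomp (ginv h) g) (alpha (ginv g) x).
  apply: H; rewrite ?src_ginv //; apply/in_idealP; rewrite ?ginvK ?xK //.
  by rewrite alpha_in // ginvK.
by rewrite ginvM ?src_ginv // ginvK.
Qed.

Lemma alphaV_oneM g h : tgt g = tgt h ->
  alpha (ginv g) (one g * one h) = one (ginv g) * one (gcomp (ginv g) h).
Proof.
move=> tg; set u := alpha (ginv g) _; set v := one (ginv g) * _.
have gh_g : one g * one h * one g = one g * one h by rewrite -mulrA (oneC h) mulrA one_idem.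
have gh_h : one g * one h * one h = one g * one h by rewrite -mulrA one_idem.
have u_g : u * one (ginv g) = u by apply: alpha_in; rewrite ginvK.
have u_gh : u * one (gcomp (ginv g) h) = u by apply: alphaV_in_comp.
have v_g : v * one (ginv g) = v by rewrite -mulrA (oneC (gcomp _ _)) mulrA one_idem.
have v_gh : v * one (gcomp (ginv g) h) = v by rewrite -mulrA one_idem.
have tVg : tgt (ginv g) = tgt (gcomp (ginv g) h) by rewrite tgt_comp // src_ginv.
have w_g : alpha g v * one g = alpha g v by apply: alpha_in.
have w_h : alpha g v * one h = alpha g v.
  by have := alphaV_in_comp tVg v_g v_gh; rewrite ginvK compKVg.
have vu : v = v * u.
  rewrite -{1}(alphaVK v_g) -w_h -{1}w_g -[_ * one g * _]mulrA.
  by rewrite alphaM ?ginvK // alphaVK.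
by rewrite vu /v -mulrA (oneC (gcomp _ _)) u_gh oneC u_g.
Qed.

End PartialActionTheory.

Definition mono (G : groupoid) (A : pzRingType) (x : A) (g : mor G) : mor G -> A :=
  fun k => if k == g then x else 0.

Section SkewModuleTheory.
Variables (G : groupoid) (A : pzRingType).
Variables (one : mor G -> A) (alpha : mor G -> A -> A).
Hypothesis upa : unital_partial_action one alpha.
Implicit Types (g h k : mor G) (x y c : A).
Local Notation emb := (skew_emb one).

Lemma mono_mul x g y h :
  skew_mul alpha (mono x g) (mono y h) =
  if src g == tgt h then mono (alpha g (alpha (ginv g) x * y)) (gcomp g h)
  else fun _ => 0.
Proof.
apply: functional_extensionality => k; rewrite /skew_mul /mono.
rewrite (bigD1 g) //= [X in _ + X]big1 ?addr0; last first.
  move=> g' /negbTE ->; apply: big1 => h' _.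
  by rewrite (alpha0 upa) mul0r (alpha0 upa).
rewrite eqxx big_mkcond (bigD1 h) //= [X in _ + X]big1 ?addr0; last first.
  by move=> h' /negbTE ->; rewrite mulr0 (alpha0 upa); case: ifP.
by rewrite eqxx; case: (src g == tgt h) => //=; rewrite eq_sym.
Qed.

Lemma mono_elt x g : x * one g = x -> skew_elt one (mono x g).
Proof.
move=> x_in k; rewrite /mono; case: eqP => [->|_]; first exact/(in_idealP upa).
by exists 0; rewrite mul0r.
Qed.

Lemma emb_elt c : skew_elt one (emb c).
Proof.
move=> k; rewrite /skew_emb; case: ifP => _; first by exists c.
by exists 0; rewrite mul0r.
Qed.

Lemma emb_in c k : emb c k * one k = emb c k.
Proof. exact/(in_idealP upa)/emb_elt. Qed.

Lemma zero_elt : skew_elt one (fun _ => 0).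
Proof. by move=> k; exists 0; rewrite mul0r. Qed.

Variables (M : zmodType) (act : (mor G -> A) -> M -> M).
Hypothesis act_module : skew_module one alpha act.

Lemma act0l m : act (fun _ => 0) m = 0.
Proof.
case: act_module => _ actDl _ _.
have zeroD : skew_add (fun _ : mor G => 0 : A) (fun _ => 0) = (fun _ => 0).
  by apply: functional_extensionality => k; rewrite /skew_add addr0.
apply: (addrI (act (fun _ => 0) m)).
by rewrite -actDl ?zeroD ?addr0 //; exact: zero_elt.
Qed.

Lemma act0r f : skew_elt one f -> act f 0 = 0.
Proof.
case: act_module => actDr _ _ _ f_elt.
by apply: (addrI (act f 0)); rewrite -actDr // !addr0.
Qed.

Lemma act_sumr f (I : Type) (r : seq I) (P : pred I) (F : I -> M) :
  skew_elt one f ->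
  act f (\sum_(i <- r | P i) F i) = \sum_(i <- r | P i) act f (F i).
Proof.
case: act_module => actDr _ _ _ f_elt.
exact: (big_morph (act f) (fun m m' => actDr f m m' f_elt) (act0r f_elt)).
Qed.

Lemma act_mono0 g m : act (mono 0 g) m = 0.
Proof.
have -> : mono (0 : A) g = fun _ => 0.
  by apply: functional_extensionality => k; rewrite /mono; case: ifP.
exact: act0l.
Qed.

Lemma act_monoD x y g m : x * one g = x -> y * one g = y ->
  act (mono (x + y) g) m = act (mono x g) m + act (mono y g) m.
Proof.
case: act_module => _ actDl _ _ x_in y_in.
rewrite -actDl; try exact: mono_elt.
congr act; apply: functional_extensionality => k.
by rewrite /skew_add /mono; case: ifP; rewrite ?addr0.
Qed.

Lemma act_mono_sum (I : Type) (r : seq I) (P : pred I) (F : I -> A) g m :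
  (forall i, P i -> F i * one g = F i) ->
  act (mono (\sum_(i <- r | P i) F i) g) m = \sum_(i <- r | P i) act (mono (F i) g) m.
Proof.
move=> F_in; pose K x z := x * one g = x /\ act (mono x g) m = z.
suff [] : K (\sum_(i <- r | P i) F i) (\sum_(i <- r | P i) act (mono (F i) g) m) by [].
apply: big_rec2 => [|i x z Pi [x_in <-]]; first by rewrite /K mul0r act_mono0.
split; first by rewrite mulrDl x_in F_in.
by rewrite act_monoD ?F_in.
Qed.

Lemma act_monomials f m : skew_elt one f -> act f m = \sum_k act (mono (f k) k) m.
Proof.
case: act_module => _ actDl _ _ f_elt.
pose f_on (s : seq (mor G)) k := if k \in s then f k else 0.
have f_on_elt s : skew_elt one (f_on s).
  by move=> k; rewrite /f_on; case: ifP => _; [apply: f_elt | exists 0; rewrite mul0r].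
have act_f_on s : uniq s -> act (f_on s) m = \sum_(k <- s) act (mono (f k) k) m.
  elim: s => [|g s IHs] /=.
    have -> : f_on [::] = (fun _ => 0) by apply: functional_extensionality.
    by rewrite big_nil act0l.
  case/andP=> g_notin s_uniq; rewrite big_cons -IHs //.
  have f_in : f g * one g = f g by apply/(in_idealP upa).
  rewrite -actDl; [|exact: mono_elt|exact: f_on_elt].
  congr act; apply: functional_extensionality => k.
  rewrite /skew_add /f_on /mono in_cons.
  by case: (eqVneq k g) => [->|_] /=; rewrite ?(negbTE g_notin) ?addr0 ?add0r.
have -> : f = f_on (enum (mor G)).
  by apply: functional_extensionality => k; rewrite /f_on mem_enum.
rewrite act_f_on ?enum_uniq // big_enum /=.
by apply: eq_bigr => k _; rewrite /f_on mem_enum.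
Qed.

Lemma act_monoM x g y h m : x * one g = x -> y * one h = y ->
  act (mono x g) (act (mono y h) m) =
  if src g == tgt h then act (mono (alpha g (alpha (ginv g) x * y)) (gcomp g h)) m else 0.
Proof.
case: act_module => _ _ actM _ x_in y_in.
rewrite -actM; [|exact: mono_elt..].
by rewrite mono_mul; case: ifP => _ //; rewrite act0l.
Qed.

Lemma act_emb_mono c x h m : x * one h = x ->
  act (emb c) (act (mono x h) m) = act (mono (c * x) h) m.
Proof.
move=> x_in.
have x_in_tgt : x * one (idm (tgt h)) = x by rewrite -x_in -mulrA (one_tgt upa).
rewrite (act_monomials _ (emb_elt c)) (bigD1 (idm (tgt h))) //=.
rewrite [X in _ + X]big1 ?addr0; last first.
  move=> k k_ne; rewrite act_monoM ?emb_in //; case: ifP => // /eqP sk.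
  have k_nid : k != idm (src k) by rewrite sk.
  by rewrite /skew_emb (negbTE k_nid) (alpha0 upa) mul0r (alpha0 upa) act_mono0.
rewrite act_monoM ?emb_in // src_idm eqxx /skew_emb src_idm eqxx ginv_idm comp_idl.
rewrite (alpha_idm upa); last by rewrite -mulrA x_in_tgt.
rewrite (alpha_idm upa); last by rewrite -mulrA (one_idem upa).
by rewrite -mulrA (oneC upa) x_in_tgt.
Qed.

Lemma act_mono_emb x g c m : x * one g = x ->
  act (mono x g) (act (emb c) m) = act (mono (x * alpha g (c * one (ginv g))) g) m.
Proof.
move=> x_in.
rewrite (act_monomials _ (emb_elt c)) act_sumr; last exact: mono_elt.
rewrite (bigD1 (idm (src g))) //= [X in _ + X]big1 ?addr0; last first.
  move=> k k_ne; rewrite act_monoM ?emb_in //; case: ifP => // /eqP sk.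
  have k_nid : k != idm (src k).
    by apply: contra k_ne => /eqP kE; rewrite sk {2}kE tgt_idm -kE.
  by rewrite /skew_emb (negbTE k_nid) mulr0 (alpha0 upa) act_mono0.
rewrite act_monoM ?emb_in // tgt_idm eqxx /skew_emb src_idm eqxx comp_idr.
set y := alpha (ginv g) x.
have y_in : y * one (ginv g) = y by apply: (alpha_in upa); rewrite ginvK.
have one_src : one (idm (src g)) * one (ginv g) = one (ginv g).
  by rewrite (oneC upa) -(tgt_ginv g) (one_tgt upa).
have -> : y * (c * one (idm (src g))) = y * (c * one (ginv g)).
  rewrite -{1}y_in -mulrA; congr (y * _).
  by rewrite (oneC upa) -mulrA one_src.
rewrite (alphaM upa) ?y_in //; last by rewrite -mulrA (one_idem upa).
by rewrite /y (alphaK upa).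
Qed.

Lemma act_skew_one m :
  act (skew_one one) m = \sum_(e : obj G) act (mono (one (idm e)) (idm e)) m.
Proof.
rewrite (act_monomials _ (emb_elt 1)) (partition_big (@src G) predT) //=.
apply: eq_bigr => e _.
rewrite (bigD1 (idm e)) /= ?src_idm ?eqxx // [X in _ + X]big1 ?addr0.
  by rewrite /skew_emb src_idm eqxx mul1r.
move=> k /andP [/eqP sk k_ne].
have k_nid : k != idm (src k) by rewrite sk.
by rewrite /skew_emb (negbTE k_nid) act_mono0.
Qed.

Lemma act_mono_one_mono_one g k m :
  act (mono (one g) g) (act (mono (one k) k) m) =
  if src g == tgt k then act (emb (one g)) (act (mono (one (gcomp g k)) (gcomp g k)) m)
  else 0.
Proof.
rewrite act_monoM ?(one_idem upa) //; case: eqP => // sg.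
have tVg : tgt (ginv g) = tgt k by rewrite tgt_ginv.
have := alphaV_oneM upa tVg; rewrite ginvK.
by rewrite (alphaV_one upa) => ->; rewrite act_emb_mono // (one_idem upa).
Qed.

End SkewModuleTheory.

Lemma additive_map_sum (M N : zmodType) (phi : M -> N) (I : Type) (r : seq I)
    (P : pred I) (F : I -> M) :
  additive_map phi -> phi (\sum_(i <- r | P i) F i) = \sum_(i <- r | P i) phi (F i).
Proof.
move=> phiD; have phi0 : phi 0 = 0.
  by apply: (addrI (phi 0)); rewrite -phiD !addr0.
exact: (big_morph phi phiD phi0).
Qed.

Lemma trace_jE (G : groupoid) (A : pzRingType) (one : mor G -> A)
    (alpha : mor G -> A -> A) (ej : obj G) (a : A) :
  trace_j one alpha ej a = \sum_(g | tgt g == ej) alpha g (a * one (ginv g)).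
Proof.
rewrite [RHS](partition_big (@src G) predT) //=.
by apply: eq_bigr => ei _; apply: eq_bigl => g; rewrite /homset andbC.
Qed.

Section Averaging.
Variables (G : groupoid) (A : pzRingType).
Variables (one : mor G -> A) (alpha : mor G -> A -> A).
Hypothesis upa : unital_partial_action one alpha.
Variables (M N : zmodType).
Variables (actM : (mor G -> A) -> M -> M) (actN : (mor G -> A) -> N -> N).
Hypotheses (M_module : skew_module one alpha actM) (N_module : skew_module one alpha actN).
Variables (q : N -> M) (a : A).
Hypothesis q_base : base_linear one actN actM q.
Hypothesis a_central : central a.
Implicit Types (g h k : mor G) (c : A) (n : N).
Local Notation emb := (skew_emb one).
Local Notation one_mono g := (mono (one g) g).
Local Notation weight g := (mono (a * one (ginv g)) (ginv g)).

Definition average n : M := \sum_g actM (one_mono g) (q (actN (weight g) n)).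

Let one_idem := one_idem upa.

Lemma weight_in g : a * one (ginv g) * one (ginv g) = a * one (ginv g).
Proof. by rewrite -mulrA one_idem. Qed.

Lemma average_additive : additive_map average.
Proof.
move=> n n'; rewrite /average -big_split; apply: eq_bigr => g _.
case: M_module => actMDr _ _ _; case: N_module => actNDr _ _ _.
rewrite actNDr; last exact: (mono_elt upa (weight_in g)).
by rewrite q_base.1 actMDr //; exact: (mono_elt upa (one_idem g)).
Qed.

Lemma average_emb c n : average (actN (emb c) n) = actM (emb c) (average n).
Proof.
rewrite /average (act_sumr M_module _ _ _ (emb_elt one c)); apply: eq_bigr => g _.
rewrite (act_emb_mono upa M_module) // (act_mono_emb upa N_module) ?weight_in // ginvK.
set y := alpha (ginv g) (c * one g).
have y_in : y * one (ginv g) = y by apply: (alpha_in upa); rewrite ginvK -mulrA one_idem.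
have -> : a * one (ginv g) * y = y * (a * one (ginv g)).
  by rewrite -mulrA (oneC upa) mulrA a_central -mulrA.
rewrite -(act_emb_mono upa N_module) ?weight_in // q_base.2.
rewrite (act_mono_emb upa M_module) // y_in (alphaK upa) -?mulrA ?one_idem //.
by rewrite (oneC upa) -mulrA one_idem.
Qed.

Lemma average_one_mono_term g h n : tgt g = tgt h ->
  actM (one_mono g) (q (actN (weight g) (actN (one_mono h) n))) =
  actM (emb (one h)) (actM (one_mono g) (q (actN (weight (gcomp (ginv h) g)) n))).
Proof.
move=> tg; set k := gcomp (ginv g) h.
have kE : ginv (gcomp (ginv h) g) = k by rewrite ginvM ?src_ginv // ginvK.
set w := one (ginv g) * one k.
have w_g : w * one (ginv g) = w by rewrite -mulrA (oneC upa k) mulrA one_idem.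
have w_k : w * one k = w by rewrite -mulrA one_idem.
have tk : tgt (ginv g) = tgt k by rewrite tgt_comp // src_ginv.
have alpha_w : alpha g w = one g * one h.
  by have := alphaV_oneM upa tk; rewrite ginvK compKVg.
have wC b : w * b = b * w.
  by rewrite /w -mulrA (oneC upa k) mulrA (oneC upa (ginv g)) -mulrA.
have coefE : alpha (ginv g) (alpha g (a * one (ginv g)) * one h) = w * (a * one k).
  have gh_g : one g * one h * one g = one g * one h.
    by rewrite -mulrA (oneC upa h) mulrA one_idem.
  rewrite -(alpha_in upa (weight_in g)) -mulrA.
  rewrite (alphaM upa) ?ginvK ?(alpha_in upa (weight_in g)) ?gh_g //.
  rewrite (alphaVK upa (weight_in g)) (alphaV_oneM upa tg) -/k -/w.
  have w_gw : one (ginv g) * w = w by rewrite /w mulrA one_idem.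
  by rewrite -mulrA w_gw [w * (a * _)]mulrA wC -mulrA w_k.
rewrite (act_monoM upa N_module) ?weight_in ?one_idem // src_ginv tg eqxx ginvK coefE.
rewrite -(act_emb_mono upa N_module); last by rewrite -mulrA one_idem.
rewrite kE q_base.2 (act_mono_emb upa M_module) //.
rewrite w_g alpha_w mulrA one_idem (act_emb_mono upa M_module) ?one_idem //.
by rewrite (oneC upa h).
Qed.

Lemma average_one_mono h n : average (actN (one_mono h) n) = actM (one_mono h) (average n).
Proof.
have q0 : q 0 = 0 by apply: (addrI (q 0)); rewrite -q_base.1 !addr0.
transitivity (\sum_(g | tgt g == tgt h)
    actM (emb (one h)) (actM (one_mono g) (q (actN (weight (gcomp (ginv h) g)) n)))).
  rewrite /average [RHS]big_mkcond; apply: eq_bigr => g _.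
  case: eqP => [|tg]; first exact: average_one_mono_term.
  rewrite (act_monoM upa N_module) ?weight_in ?one_idem // src_ginv.
  case: eqP => // _; rewrite q0 (act0r M_module) //.
  exact: (mono_elt upa (one_idem g)).
rewrite /average (act_sumr M_module); last exact: (mono_elt upa (one_idem h)).
under [RHS]eq_bigr => k _ do rewrite (act_mono_one_mono_one upa M_module).
rewrite -[RHS]big_mkcond [RHS](reindex_onto (gcomp (ginv h)) (gcomp h)) /=; last first.
  by move=> k /eqP sk; rewrite compKg // sk.
apply: eq_big => [g /= | g /eqP tg]; last by rewrite compKVg.
case: (eqVneq (tgt g) (tgt h)) => [tg | tg_ne].
  by rewrite tgt_comp ?src_ginv ?tg // tgt_ginv eqxx compKVg // eqxx.
apply/esym/negP => /andP [/eqP sh /eqP gE].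
by move: tg_ne; rewrite -gE tgt_comp // eqxx.
Qed.

Lemma average_skew_linear : skew_linear one actN actM average.
Proof.
split=> [|f n f_elt]; first exact: average_additive.
rewrite (act_monomials upa N_module n f_elt) (act_monomials upa M_module _ f_elt).
rewrite (additive_map_sum _ _ _ average_additive); apply: eq_bigr => k _.
have f_in : f k * one k = f k by apply/(in_idealP upa).
have monoE (X : zmodType) (act : (mor G -> A) -> X -> X) m :
    skew_module one alpha act ->
    act (mono (f k) k) m = act (emb (f k)) (act (one_mono k) m).
  by move=> X_module; rewrite (act_emb_mono upa X_module) ?one_idem // f_in.
by rewrite !monoE // average_emb average_one_mono.
Qed.

Lemma average_section (p : M -> N) :
    skew_linear one actM actN p -> (forall n, p (q n) = n) ->
    (forall e, trace_j one alpha e a = one (idm e)) ->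
  forall n, p (average n) = n.
Proof.
move=> [p_add p_lin] pq trace_a n.
rewrite /average (additive_map_sum _ _ _ p_add).
under eq_bigr => g _.
  rewrite p_lin; last exact: (mono_elt upa (one_idem g)).
  rewrite pq (act_monoM upa N_module) ?weight_in ?one_idem // tgt_ginv eqxx.
  rewrite (alphaV_one upa) (oneC upa (ginv g)) -mulrA one_idem comp_ginvr.
  over.
transitivity (actN (skew_one one) n); last by case: N_module.
rewrite (act_skew_one upa N_module) (partition_big (@tgt G) predT) //=.
apply: eq_bigr => e _.
rewrite -trace_a trace_jE (act_mono_sum upa N_module); last first.
  move=> g /eqP <-.
  by rewrite -(alpha_in upa (weight_in g)) -mulrA (one_tgt upa).
by apply: eq_bigr => g /eqP ->.
Qed.

End Averaging.

Theorem corollary3p6 (G : groupoid) (A : pzRingType)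
    (one : mor G -> A) (alpha : mor G -> A -> A) :
  connected G ->
  (* A = (+)_{i} A_{e_i}, with A_{e_i} = A 1_{e_i} *)
  \sum_(e : obj G) one (idm e) = 1 ->
  (forall e f : obj G, e != f -> one (idm e) * one (idm f) = 0) ->
  unital_partial_action one alpha ->
  (exists a : A, central a /\ forall e : obj G, trace_j one alpha e a = one (idm e)) ->
  semisimple_skew_extension one alpha.
Proof.
move=> _ _ _ upa [a [a_central trace_a]].
move=> L M N actL actM actN i p _ M_module N_module _ p_lin _ _ _ [q [q_base pq]].
exists (average one actM actN q a); split.
  exact: (average_skew_linear upa M_module N_module q_base a_central).
exact: (average_section upa N_module p_lin pq trace_a).
Qed.
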